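(* Let $x$ be a stable g-matching with $x\ne x^{\max}$, let $f\in F$, and let $(a,c)$ be a legal $f$-pair under $x$. Then (i) $c\in U_F^-(x)$; (ii) $x_f\prec_f x_f+\mathbf 1^a-\mathbf 1^c$; and (iii) $c$ is not interesting for $f$ under $x_f+\mathbf 1^a-\mathbf 1^c$.
   Context: Let $G=(V,E)$ be a finite bipartite graph with color classes $W$ and $F$; the edge joining $w\in W$ and $f\in F$ is written $wf$. Let $b\in\mathbb Z_+^E$ be capacities. For $v\in V$, $E_v$ is the set of edges at $v$, $\mathcal B_v=\{z\in\mathbb Z_+^{E_v}: z\le b|_{E_v}\}$, $\mathbf 1^e$ the unit vector of $e$, $|z|=\sum_e|z(e)|$, $\wedge,\vee$ componentwise min/max. Each $v$ has a choice function $C_v:\mathcal B_v\to\mathcal B_v$ with $C_v(z)\le z$ and, for all $z,z'$: (A1) $z\ge z'\ge C_v(z)\Rightarrow C_v(z')=C_v(z)$; (A2) $z\ge z'\Rightarrow C_v(z)\wedge z'\le C_v(z')$; (A3) $z\ge z'\Rightarrow|C_v(z)|\ge|C_v(z')|$. $z$ is acceptable if $C_v(z)=z$; for distinct acceptable $z,z'$, $z'\prec_v z$ iff $C_v(z\vee z')=z$. $x_v$ = restriction of $x$ to $E_v$. A g-matching is $x\in\mathbb Z_+^E$, $x\le b$, each $x_v$ acceptable; $x\prec_F y$ (distinct) iff $x_f\preceq_f y_f$ for all $f\in F$. $e\in E_v$ is interesting for $v$ under acceptable $z$ if some $z'\in\mathcal B_v$ has $z'(e)>z(e)$, $z'(e')=z(e')$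 for $e'\neq e$, $C_v(z')(e)>z(e)$; $e=wf$ is interesting for $v\in\{w,f\}$ under a g-matching $x$ if so under $x_v$, and blocks $x$ if interesting for both endpoints; stable g-matchings (no blocking edge) form a finite lattice under $\prec_F$ with maximum $x^{\max}$. For stable $x$: $U_F^+(x)$ is the set of edges $wf$ interesting for $f$ under $x$; $U_F^-(x)$ is the set of edges $wf$ with $x(wf)>0$ not interesting for $f$ under $x$. A legal $f$-pair under $x$ is $(a,c)$ with $a\in U_F^+(x)\cap E_f$, $c\in E_f\setminus\{a\}$ and $C_f(x_f+\mathbf 1^a)=x_f+\mathbf 1^a-\mathbf 1^c$. *)

From mathcomp Require Import all_boot.
Set Implicit Arguments. Unset Strict Implicit. Unset Printing Implicit Defensive.

(* Bipartite graph: color classes W and F (finite types); an edge wf is a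
   pair (w,f) : W * F; the edge set is E : {set W * F}.  Vertices are W + F.
   Vectors in Z_+^E (or Z_+^{E_v}) are represented by functions
   W * F -> nat that vanish outside E (resp. E_v). *)

Definition vec (W F : finType) := {ffun W * F -> nat}.

Definition atv (W F : finType) (E : {set W * F}) (v : W + F) (e : W * F) : bool :=
  (e \in E) && match v with inl w => e.1 == w | inr f => e.2 == f end.

Definition inB (W F : finType) (E : {set W * F}) (b : W * F -> nat)
  (v : W + F) (z : vec W F) : Prop :=
  forall e, z e <= b e /\ (~~ atv E v e -> z e = 0).

Definition vle (W F : finType) (z z' : vec W F) : Prop := forall e, z e <= z' e.
Definition vmin (W F : finType) (z z' : vec W F) : vec W F := [ffun e => minn (z e) (z' e)].
Definition vmax (W F : finType) (z z' : vec W F) : vec W F := [ffun e => maxn (z e) (z' e)].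
Definition vadd (W F : finType) (z z' : vec W F) : vec W F := [ffun e => z e + z' e].
(* truncated componentwise subtraction (only used where it is exact) *)
Definition vsub (W F : finType) (z z' : vec W F) : vec W F := [ffun e => z e - z' e].
Definition vsize (W F : finType) (z : vec W F) : nat := \sum_e z e.
Definition unitv (W F : finType) (a : W * F) : vec W F := [ffun e => nat_of_bool (e == a)].

Definition restr (W F : finType) (E : {set W * F}) (v : W + F) (x : vec W F) : vec W F :=
  [ffun e => if atv E v e then x e else 0].

Record choice_system (W F : finType) (E : {set W * F}) (b : W * F -> nat)
  (C : W + F -> vec W F -> vec W F) : Prop := {
  cs_dom : forall v z, inB E b v z -> inB E b v (C v z);
  cs_le  : forall v z, inB E b v z -> vle (C v z) z;
  cs_A1  : forall v z z', inB E b v z -> inB E b v z' ->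
             vle z' z -> vle (C v z) z' -> C v z' = C v z;
  cs_A2  : forall v z z', inB E b v z -> inB E b v z' ->
             vle z' z -> vle (vmin (C v z) z') (C v z');
  cs_A3  : forall v z z', inB E b v z -> inB E b v z' ->
             vle z' z -> vsize (C v z') <= vsize (C v z)
}.


Definition acceptable (W F : finType) (E : {set W * F}) (b : W * F -> nat)
  (C : W + F -> vec W F -> vec W F) (v : W + F) (z : vec W F) : Prop :=
  inB E b v z /\ C v z = z.

(* prec .. v z' z  :  z' ≺_v z  (distinct acceptable z, z' with C_v(z ∨ z') = z) *)
Definition prec (W F : finType) (E : {set W * F}) (b : W * F -> nat)
  (C : W + F -> vec W F -> vec W F) (v : W + F) (z' z : vec W F) : Prop :=
  [/\ acceptable E b C v z, acceptable E b C v z', z != z' & C v (vmax z z') = z].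

Definition preceq (W F : finType) (E : {set W * F}) (b : W * F -> nat)
  (C : W + F -> vec W F -> vec W F) (v : W + F) (z' z : vec W F) : Prop :=
  z' = z \/ prec E b C v z' z.

Definition gmatching (W F : finType) (E : {set W * F}) (b : W * F -> nat)
  (C : W + F -> vec W F -> vec W F) (x : vec W F) : Prop :=
  [/\ forall e, x e <= b e,
      forall e, e \notin E -> x e = 0
    & forall v, acceptable E b C v (restr E v x)].

Definition interesting (W F : finType) (E : {set W * F}) (b : W * F -> nat)
  (C : W + F -> vec W F -> vec W F) (v : W + F) (z : vec W F) (e : W * F) : Prop :=
  atv E v e /\
  exists z', [/\ inB E b v z', z e < z' e,
                 (forall e', e' != e -> z' e' = z e') & z e < C v z' e].

Definition blocks (W F : finType) (E : {set W * F}) (b : W * F -> nat)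
  (C : W + F -> vec W F -> vec W F) (x : vec W F) (e : W * F) : Prop :=
  interesting E b C (inl e.1) (restr E (inl e.1) x) e /\
  interesting E b C (inr e.2) (restr E (inr e.2) x) e.

Definition stable (W F : finType) (E : {set W * F}) (b : W * F -> nat)
  (C : W + F -> vec W F -> vec W F) (x : vec W F) : Prop :=
  gmatching E b C x /\ forall e, e \in E -> ~ blocks E b C x e.

Definition leF (W F : finType) (E : {set W * F}) (b : W * F -> nat)
  (C : W + F -> vec W F -> vec W F) (x y : vec W F) : Prop :=
  forall f : F, preceq E b C (inr f) (restr E (inr f) x) (restr E (inr f) y).

Definition is_max_stable (W F : finType) (E : {set W * F}) (b : W * F -> nat)
  (C : W + F -> vec W F -> vec W F) (xm : vec W F) : Prop :=
  stable E b C xm /\ forall y, stable E b C y -> leF E b C y xm.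

Definition UFplus (W F : finType) (E : {set W * F}) (b : W * F -> nat)
  (C : W + F -> vec W F -> vec W F) (x : vec W F) (e : W * F) : Prop :=
  e \in E /\ interesting E b C (inr e.2) (restr E (inr e.2) x) e.

Definition UFminus (W F : finType) (E : {set W * F}) (b : W * F -> nat)
  (C : W + F -> vec W F -> vec W F) (x : vec W F) (e : W * F) : Prop :=
  [/\ e \in E, 0 < x e & ~ interesting E b C (inr e.2) (restr E (inr e.2) x) e].

(* (a,c) is a legal f-pair under x.  The identity
   C_f(x_f + 1^a) = x_f + 1^a - 1^c  (in Z^E) is written additively in nat as
   C_f(x_f + 1^a) + 1^c = x_f + 1^a. *)
Definition legal_pair (W F : finType) (E : {set W * F}) (b : W * F -> nat)
  (C : W + F -> vec W F -> vec W F) (x : vec W F) (f : F) (a c : W * F) : Prop :=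
  [/\ UFplus E b C x a, atv E (inr f) a, atv E (inr f) c, c != a &
      vadd (C (inr f) (vadd (restr E (inr f) x) (unitv a))) (unitv c)
      = vadd (restr E (inr f) x) (unitv a)].

(* Put z = x_f + 1^a, so that C_f(z) = z - 1^c.  Since C_f rejects a single
   unit of c from z, adding anything to z off c does not change the choice:
   C_f(z ∨ z') = C_f(z) whenever z' <= z off c (A2 bounds the c-entry, then A1).
   Through A2 and A3 this gives C_f(z') >= C_f(z) ∧ z' and |C_f(z')| <= |C_f(z)|,
   so c cannot be interesting under any u with u <= C_f(z) off c and
   |u| >= |C_f(z)|.  Both u = x_f and u = C_f(z) qualify, which gives (i) and
   (iii); (ii) holds because x_f ∨ C_f(z) = z. *)

From mathcomp Require Import all_boot.
From mathcomp Require Import zify.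

Set Implicit Arguments.
Unset Strict Implicit.
Unset Printing Implicit Defensive.

Section Vectors.
Variables W F : finType.
Implicit Types u y z : vec W F.

Lemma vsizeD u y : vsize (vadd u y) = vsize u + vsize y.
Proof. by rewrite /vsize -big_split; apply: eq_bigr => e _; rewrite ffunE. Qed.

Lemma vsize_unitv (c : W * F) : vsize (unitv c) = 1.
Proof.
rewrite /vsize (bigD1 c) //= ffunE eqxx big1 // => e /negbTE.
by rewrite ffunE => ->.
Qed.

Lemma vsize_le u y : vle u y -> vsize u <= vsize y.
Proof. by move=> le_uy; apply: leq_sum => e _. Qed.

Lemma vsubDK u y : vsub (vadd u y) y = u.
Proof. by apply/ffunP => e; rewrite !ffunE addnK. Qed.

Lemma vle_vmaxl u y : vle u (vmax u y).
Proof. by move=> e; rewrite ffunE leq_maxl. Qed.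

Lemma vle_vmaxr u y : vle y (vmax u y).
Proof. by move=> e; rewrite ffunE leq_maxr. Qed.

Section Exchange.
Variables (u y : vec W F) (a c : W * F).
Hypothesis exch : vadd y (unitv c) = vadd u (unitv a).

Let exchE e : y e + (e == c) = u e + (e == a).
Proof. by have := congr1 (fun g : vec W F => g e) exch; rewrite !ffunE. Qed.

Lemma exchange_vsub : y = vsub (vadd u (unitv a)) (unitv c).
Proof. by rewrite -exch vsubDK. Qed.

Lemma vsize_exchange : vsize y = vsize u.
Proof. by have := congr1 (fun g : vec W F => vsize g) exch; rewrite !vsizeD !vsize_unitv => /addIn. Qed.

Lemma exchange_le e : e != c -> u e <= y e.
Proof. by move=> /negbTE e_c; have := exchE e; rewrite e_c; lia. Qed.

Lemma exchange_at : a != c -> u c = y c + 1.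
Proof. by move=> /negbTE a_c; have := exchE c; rewrite eqxx eq_sym a_c; lia. Qed.

Lemma vmax_exchange : a != c -> vmax y u = vadd u (unitv a).
Proof.
move=> a_c; apply/ffunP => e; rewrite !ffunE; have := exchE e.
case: (eqVneq e c) => [->|_]; first by rewrite eq_sym (negbTE a_c); lia.
by case: (e == a) => /=; lia.
Qed.

End Exchange.
End Vectors.

Section ChoiceSystem.
Variables (W F : finType) (E : {set W * F}) (b : W * F -> nat).
Variable C : W + F -> vec W F -> vec W F.
Hypothesis HC : choice_system E b C.
Variable v : W + F.
Implicit Types u z : vec W F.

Lemma inB_le z z' : inB E b v z' -> vle z z' -> inB E b v z.
Proof.
move=> Bz' le_zz' e; have [bz' supp_z'] := Bz' e.
split=> [|/supp_z' z'0]; first exact: leq_trans (le_zz' e) bz'.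
by apply/eqP; rewrite -leqn0 -z'0.
Qed.

Lemma inB_vmax z z' : inB E b v z -> inB E b v z' -> inB E b v (vmax z z').
Proof.
move=> Bz Bz' e; rewrite ffunE; have [bz supp_z] := Bz e; have [bz' supp_z'] := Bz' e.
by split=> [|/[dup] /supp_z -> /supp_z' ->]; rewrite ?geq_max ?bz.
Qed.

Lemma inB_add_interesting u e : interesting E b C v u e -> inB E b v (vadd u (unitv e)).
Proof.
move=> [_ [z' [Bz' lt_e eq_off _]]]; apply: inB_le Bz' _ => e'; rewrite !ffunE.
by case: (eqVneq e' e) => [->|ne] /=; rewrite ?addn1 // addn0 eq_off.
Qed.

Lemma choice_acceptable z : inB E b v z -> acceptable E b C v (C v z).
Proof.
move=> Bz; have BCz := cs_dom HC Bz; split=> //.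
by apply: (cs_A1 HC Bz BCz (cs_le HC Bz)) => e.
Qed.

Section RejectOne.
Variables (z : vec W F) (c : W * F).
Hypotheses (Bz : inB E b v z) (reject_c : vadd (C v z) (unitv c) = z).

Let reject_at : z c = C v z c + 1.
Proof. by have := congr1 (fun g : vec W F => g c) reject_c; rewrite !ffunE eqxx. Qed.

Lemma choice_vmax_reject1 z' : inB E b v z' ->
  (forall e, e != c -> z' e <= z e) -> C v (vmax z z') = C v z.
Proof.
move=> Bz' z'_le; have Bw := inB_vmax Bz Bz'.
apply: esym; apply: (cs_A1 HC Bw Bz (vle_vmaxl _ _)) => e.
case: (eqVneq e c) => [->|ne].
- by have := cs_A2 HC Bw Bz (vle_vmaxl _ _) c; rewrite ffunE reject_at; lia.
- apply: (leq_trans (cs_le HC Bw e)).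
  by rewrite ffunE geq_max leqnn z'_le.
Qed.

Lemma not_interesting_reject1 u :
  (forall e, e != c -> u e <= C v z e) -> vsize (C v z) <= vsize u ->
  ~ interesting E b C v u c.
Proof.
move=> u_le size_le [_ [z' [Bz' lt_c eq_off Cz'_c]]].
have z'_le e : e != c -> z' e <= z e.
  by move=> ne; rewrite eq_off //; apply: leq_trans (u_le e ne) (cs_le HC Bz e).
have Bw := inB_vmax Bz Bz'.
have Cw := choice_vmax_reject1 Bz' z'_le.
have meet_le := cs_A2 HC Bw Bz' (vle_vmaxr _ _); rewrite Cw in meet_le.
have size_Cz' := cs_A3 HC Bw Bz' (vle_vmaxr _ _); rewrite Cw in size_Cz'.
have : vle (vadd u (unitv c)) (C v z').
  move=> e; rewrite !ffunE; case: (eqVneq e c) => [->|ne] /=; first by rewrite addn1.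
  by have := meet_le e; have := u_le e ne; rewrite ffunE eq_off //; lia.
by move/vsize_le; rewrite vsizeD vsize_unitv; lia.
Qed.

End RejectOne.
End ChoiceSystem.

Theorem lemma3p2 (W F : finType) (E : {set W * F}) (b : W * F -> nat)
  (C : W + F -> vec W F -> vec W F) (HC : choice_system E b C)
  (x xmax : vec W F) (Hx : stable E b C x) (Hmax : is_max_stable E b C xmax)
  (Hne : x <> xmax) (f : F) (a c : W * F) (Hac : legal_pair E b C x f a c) :
  let xf := restr E (inr f) x in
  let y := vsub (vadd xf (unitv a)) (unitv c) in
  [/\ UFminus E b C x c,
      prec E b C (inr f) xf y
    & ~ interesting E b C (inr f) y c].
Proof.
move=> xf y; case: Hac => [[_ a_int] a_f c_f c_a reject_c].
have [a2 c2] : a.2 = f /\ c.2 = f by move: a_f c_f => /andP[_ /eqP ->] /andP[_ /eqP ->].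
rewrite a2 in a_int; have Bz := inB_add_interesting a_int.
set z := vadd xf (unitv a) in Bz reject_c.
rewrite /y -(exchange_vsub reject_c).
have a_c : a != c by rewrite eq_sym.
have xf_c := exchange_at reject_c a_c.
have not_int := not_interesting_reject1 HC Bz reject_c.
split.
- split; first by case/andP: c_f.
  + by move: xf_c; rewrite /xf ffunE c_f addn1 => ->.
  + rewrite c2; apply: not_int (exchange_le reject_c) _.
    by rewrite (vsize_exchange reject_c).
- split; [exact: choice_acceptable | by case: Hx => [[_ _]] | |].
  + by apply/eqP => Cz_xf; move: xf_c; rewrite Cz_xf addn1 => /n_Sn.
  + by rewrite (vmax_exchange reject_c a_c).
- exact: not_int.
Qed.
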